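(* Let $b:\mathbb R\to\mathbb R$ be twice differentiable with $0<L_b\le b''(z)\le U_b$ for all $z$. Let $m\ge1$, $\lambda\in(0,1]$, $G>0$, $A>0$, let $t\ge3$ be an integer, let $\boldsymbol\theta_0\in\mathbb R^p$, let $\mathbf g_1,\dots,\mathbf g_{t-1},\mathbf u\in\mathbb R^p$ satisfy $\|\mathbf g_s\|_2\le G\sqrt m$ and $\|\mathbf u\|_2\le G\sqrt m$, let $r_1,\dots,r_{t-1}\in\mathbb R$ satisfy $\sum_{s=1}^{t-1}r_s^2\le A\,t\log t$, and let $\alpha=\sqrt t$. Define $$\mathcal L(\boldsymbol\theta)=\sum_{s=1}^{t-1}\Big(b(\langle\mathbf g_s,\boldsymbol\theta-\boldsymbol\theta_0\rangle)-r_s\langle\mathbf g_s,\boldsymbol\theta-\boldsymbol\theta_0\rangle\Big)+\frac{m\lambda}{2}\|\boldsymbol\theta-\boldsymbol\theta_0\|_2^2-\alpha\langle\mathbf u,\boldsymbol\theta-\boldsymbol\theta_0\rangle,$$ and the gradient-descent iterates $\boldsymbol\theta^{(0)}=\boldsymbol\theta_0$, $\boldsymbol\theta^{(j)}=\boldsymbol\theta^{(j-1)}-\eta\nabla\mathcal L(\boldsymbol\theta^{(j-1)})$ with $0<\eta\le(m\lambda+U_b\,t\,m\,G^2)^{-1}$. Then there is a constant $E>0$ depending only on $G,A,L_b,b(0),b'(0)$ such that for every $j\ge0$, $$\|\boldsymbol\theta^{(j)}-\boldsymbol\theta_0\|_2\le E\sqrt{\frac{t\log t}{m\lambda^2}}.$$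 *)

From Stdlib Require Import Reals Lra Lia.
From Coquelicot Require Import Coquelicot.
Open Scope R_scope.

Fixpoint sumR (n : nat) (f : nat -> R) : R :=
  match n with
  | O => 0
  | S n' => sumR n' f + f n'
  end.

(* Vectors of R^p are represented as nat -> R; only coordinates 0..p-1 matter. *)
Definition vec := nat -> R.

Definition inner (p : nat) (x y : vec) : R := sumR p (fun i => x i * y i).
Definition norm2 (p : nat) (x : vec) : R := sqrt (inner p x x).
Definition vsub (x y : vec) : vec := fun i => x i - y i.
Definition unitv (i : nat) : vec := fun k => if Nat.eqb k i then 1 else 0.

Definition grad (F : vec -> R) (th : vec) : vec :=
  fun i => Derive (fun h => F (fun k => th k + h * unitv i k)) 0.

Fixpoint gd (F : vec -> R) (eta : R) (th0 : vec) (j : nat) : vec :=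
  match j with
  | O => th0
  | S j' => let th := gd F eta th0 j' in fun i => th i - eta * grad F th i
  end.

(* The loss L(theta); the data g_s, r_s are indexed by s = 1..t-1. *)
Definition lossL (b : R -> R) (p t : nat) (th0 : vec) (g : nat -> vec) (r : nat -> R)
  (m lam alpha : R) (u : vec) (th : vec) : R :=
  sumR (t - 1) (fun k =>
    b (inner p (g (S k)) (vsub th th0)) - r (S k) * inner p (g (S k)) (vsub th th0))
  + m * lam / 2 * (norm2 p (vsub th th0)) ^ 2
  - alpha * inner p u (vsub th th0).

From Stdlib Require Import Reals Lra Lia.
From Coquelicot Require Import Coquelicot.
Open Scope R_scope.

(* Gradient descent with step at most the inverse of the smoothness constant
   m*lam + U_b * sum_s |g_s|^2 never increases the loss, so
   L(theta_j) <= L(theta_0) = (t-1) b(0).  Conversely, b'' >= L_b gives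
   b(z) - r z >= b(0) - (b'(0) - r)^2 / (2 L_b), hence
   L(theta) >= (t-1) b(0) - sum_s (b'(0) - r_s)^2 / (2 L_b)
               + m lam/2 |theta - theta_0|^2 - alpha |u| |theta - theta_0|.
   Comparing the two bounds gives a quadratic inequality in |theta_j - theta_0|,
   solved by AM-GM; the bounds on the data make its right-hand side
   O(t log t / (m lam^2)). *)

Lemma discr_le_of_quadratic_nonneg a c d :
  0 <= d -> (forall l, 0 <= a - 2 * l * c + l ^ 2 * d) -> c ^ 2 <= a * d.
Proof.
  intros Hd H. destruct (Rle_lt_or_eq_dec 0 d Hd) as [Hd'|<-].
  - specialize (H (c / d)).
    replace (a - 2 * (c / d) * c + (c / d) ^ 2 * d) with ((a * d - c ^ 2) / d) in H by (field; lra).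
    assert (0 <= (a * d - c ^ 2) / d * d) by (apply Rmult_le_pos; lra).
    replace ((a * d - c ^ 2) / d * d) with (a * d - c ^ 2) in H0 by (field; lra). lra.
  - destruct (Req_dec c 0) as [->|Hc]; [lra|].
    specialize (H ((a + 1) / (2 * c))).
    replace (a - 2 * ((a + 1) / (2 * c)) * c + ((a + 1) / (2 * c)) ^ 2 * 0) with (-1) in H
      by (field; lra). lra.
Qed.

Lemma quadratic_ge_min c d a z : 0 < a -> c - / (2 * a) * d ^ 2 <= c + d * z + a * z ^ 2 / 2.
Proof.
  intro Ha. enough (0 <= / (2 * a) * (a * z + d) ^ 2).
  { replace (/ (2 * a) * (a * z + d) ^ 2) with (d * z + a * z ^ 2 / 2 + / (2 * a) * d ^ 2) in H
      by (field; lra). lra. }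
  apply Rmult_le_pos; [apply Rlt_le, Rinv_0_lt_compat; lra|apply pow2_ge_0].
Qed.

Lemma sq_le_of_half_sq_le k be ga N :
  0 <= k -> k / 2 * N ^ 2 <= be * N + ga -> (k * N) ^ 2 <= 4 * be ^ 2 + 4 * k * ga.
Proof. intros Hk H. pose proof (pow2_ge_0 (k * N - 2 * be)). nra. Qed.

Lemma mul_le_one_of_le_inv eta D D' : 0 < D -> 0 <= eta <= / D -> D' <= D -> eta * D' <= 1.
Proof.
  intros HD Heta HD'. apply Rle_trans with (eta * D); [apply Rmult_le_compat_l; lra|].
  rewrite <- (Rinv_l D) by lra. apply Rmult_le_compat_r; lra.
Qed.

Lemma le_mul_sqrt_of_sq_le N d E X :
  0 <= N -> 0 < d -> 0 <= E -> d * N ^ 2 <= E * X -> N <= sqrt E * sqrt (X / d).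
Proof.
  intros HN Hd HE H. rewrite <- sqrt_mult_alt, <- (sqrt_pow2 N) by assumption.
  apply sqrt_le_1_alt. apply (Rmult_le_reg_l d); [assumption|].
  replace (d * (E * (X / d))) with (E * X) by (field; lra). exact H.
Qed.

Lemma ln_ge_ln3 T : 3 <= T -> 0 < ln 3 <= ln T.
Proof.
  intro HT. split; [rewrite <- ln_1; apply ln_increasing; lra|].
  destruct (Req_dec T 3) as [->|Hne]; [lra|]. left; apply ln_increasing; lra.
Qed.

Lemma sumR_ext n f g : (forall k, (k < n)%nat -> f k = g k) -> sumR n f = sumR n g.
Proof.
  induction n as [|n IH]; intros H; simpl; [easy|].
  rewrite IH, H; [easy|lia|intros; apply H; lia].
Qed.

Lemma sumR_plus n f g : sumR n (fun k => f k + g k) = sumR n f + sumR n g.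
Proof. induction n as [|n IH]; simpl; [ring|rewrite IH; ring]. Qed.

Lemma sumR_minus n f g : sumR n (fun k => f k - g k) = sumR n f - sumR n g.
Proof. induction n as [|n IH]; simpl; [ring|rewrite IH; ring]. Qed.

Lemma sumR_scal n c f : sumR n (fun k => c * f k) = c * sumR n f.
Proof. induction n as [|n IH]; simpl; [ring|rewrite IH; ring]. Qed.

Lemma sumR_const n c : sumR n (fun _ => c) = INR n * c.
Proof. induction n as [|n IH]; [simpl; ring|]. cbn [sumR]. rewrite IH, S_INR. ring. Qed.

Lemma sumR_le n f g : (forall k, (k < n)%nat -> f k <= g k) -> sumR n f <= sumR n g.
Proof.
  induction n as [|n IH]; intros H; simpl; [lra|].
  apply Rplus_le_compat; [apply IH; intros; apply H|apply H]; lia.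
Qed.

Lemma sumR_swap n p (f : nat -> nat -> R) :
  sumR n (fun k => sumR p (f k)) = sumR p (fun i => sumR n (fun k => f k i)).
Proof.
  induction n as [|n IH]; simpl.
  - induction p as [|p IHp]; simpl; [easy|rewrite <- IHp; ring].
  - rewrite IH, sumR_plus. easy.
Qed.

Lemma sumR_sq_sub_le n c f :
  sumR n (fun k => (c - f k) ^ 2) <= 2 * INR n * c ^ 2 + 2 * sumR n (fun k => f k ^ 2).
Proof.
  replace (2 * INR n * c ^ 2) with (sumR n (fun _ => 2 * c ^ 2)) by (rewrite sumR_const; ring).
  rewrite <- sumR_scal, <- sumR_plus.
  apply sumR_le; intros k _. pose proof (pow2_ge_0 (c + f k)). nra.
Qed.

Lemma inner_ext p a a' x x' :
  (forall k, (k < p)%nat -> a k * x k = a' k * x' k) -> inner p a x = inner p a' x'.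
Proof. apply sumR_ext. Qed.

Lemma inner_comm p x y : inner p x y = inner p y x.
Proof. apply sumR_ext; intros; ring. Qed.

Lemma inner_linr p a x c y : inner p a (fun i => x i + c * y i) = inner p a x + c * inner p a y.
Proof. unfold inner. rewrite <- sumR_scal, <- sumR_plus. apply sumR_ext; intros; ring. Qed.

Lemma inner_self_nonneg p x : 0 <= inner p x x.
Proof. unfold inner; induction p as [|p IH]; simpl; [lra|]. nra. Qed.

Lemma inner_vsub_self p a x : inner p a (vsub x x) = 0.
Proof.
  unfold inner. rewrite (sumR_ext _ _ (fun _ => 0)), sumR_const; [ring|].
  intros; unfold vsub; ring.
Qed.

Lemma inner_unitv p a i : (i < p)%nat -> inner p a (unitv i) = a i.
Proof.
  induction p as [|p IH]; intros Hi; [lia|]. unfold inner, unitv in *; simpl.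
  destruct (Nat.eqb_spec p i) as [->|Hne].
  - rewrite (sumR_ext _ _ (fun _ => 0)), sumR_const; [ring|].
    intros k Hk. destruct (Nat.eqb_spec k i); [lia|ring].
  - rewrite IH by lia. ring.
Qed.

Lemma norm2_sq p x : norm2 p x ^ 2 = inner p x x.
Proof. apply pow2_sqrt, inner_self_nonneg. Qed.

Lemma inner_sq_le p x y : inner p x y ^ 2 <= inner p x x * inner p y y.
Proof.
  apply discr_le_of_quadratic_nonneg; [apply inner_self_nonneg|]. intro l.
  pose proof (inner_self_nonneg p (fun i => x i + (- l) * y i)) as H.
  rewrite inner_linr, !(inner_comm p (fun i => _ + _)), !inner_linr, (inner_comm p y x) in H.
  nra.
Qed.

Lemma inner_le_norm2 p x y : inner p x y <= norm2 p x * norm2 p y.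
Proof.
  pose proof (inner_sq_le p x y) as H. rewrite <- !norm2_sq in H.
  assert (0 <= norm2 p x * norm2 p y) by (apply Rmult_le_pos; apply sqrt_pos).
  nra.
Qed.

Lemma sumR_inner_sq_le n p (a : nat -> vec) v K :
  (forall k, (k < n)%nat -> inner p (a k) (a k) <= K) ->
  sumR n (fun k => inner p (a k) v ^ 2) <= INR n * K * inner p v v.
Proof.
  intro HK. rewrite Rmult_assoc, <- sumR_const. apply sumR_le. intros k Hk.
  pose proof (inner_sq_le p (a k) v). pose proof (inner_self_nonneg p v). specialize (HK k Hk).
  nra.
Qed.

Lemma inner_self_le_of_norm2_le p x B : norm2 p x <= B -> inner p x x <= B ^ 2.
Proof.
  intro H. rewrite <- norm2_sq. pose proof (sqrt_pos (inner p x x)). unfold norm2 in *. nra.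
Qed.

Lemma continuity_pt_of_is_derive (f : R -> R) x l : is_derive f x l -> continuity_pt f x.
Proof.
  intro H. apply (proj2 (continuity_pt_filterlim f x)), (ex_derive_continuous f x).
  exists l; exact H.
Qed.

Lemma increasing_of_derive_nonneg (f f' : R -> R) :
  (forall x, is_derive f x (f' x)) -> (forall x, 0 <= f' x) ->
  forall x y, x <= y -> f x <= f y.
Proof.
  intros Df Hf' x y Hxy.
  destruct (MVT_gen f x y f') as [c [_ Hc]].
  - intros; apply Df.
  - intros z _. eapply continuity_pt_of_is_derive, Df.
  - specialize (Hf' c). nra.
Qed.

(* [h'] is nondecreasing and vanishes at 0, so [h] decreases up to 0 and increases after. *)
Lemma nonneg_of_derive2_nonneg (h h' h'' : R -> R) :
  (forall x, is_derive h x (h' x)) -> (forall x, is_derive h' x (h'' x)) ->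
  (forall x, 0 <= h'' x) -> h 0 = 0 -> h' 0 = 0 -> forall d, 0 <= h d.
Proof.
  intros Dh Dh' Hh'' h0 h'0 d.
  pose proof (increasing_of_derive_nonneg h' h'' Dh' Hh'') as Incr.
  destruct (MVT_gen h 0 d h') as [c [Hc Hmvt]].
  - intros; apply Dh.
  - intros z _. eapply continuity_pt_of_is_derive, Dh.
  - destruct (Rle_dec 0 d) as [Hd|Hd].
    + rewrite Rmin_left, Rmax_right in Hc by lra.
      assert (0 <= h' c) by (rewrite <- h'0; apply Incr; lra). nra.
    + rewrite Rmin_right, Rmax_left in Hc by lra.
      assert (h' c <= 0) by (rewrite <- h'0; apply Incr; lra). nra.
Qed.

Lemma taylor2_lower (f f' f'' : R -> R) c :
  (forall x, is_derive f x (f' x)) -> (forall x, is_derive f' x (f'' x)) ->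
  (forall x, c <= f'' x) ->
  forall z d, f z + f' z * d + c * d ^ 2 / 2 <= f (z + d).
Proof.
  intros Df Df' Hc z d.
  enough (0 <= f (z + d) - (f z + f' z * d + c * d ^ 2 / 2)) by lra.
  apply (nonneg_of_derive2_nonneg (fun d => f (z + d) - (f z + f' z * d + c * d ^ 2 / 2))
           (fun d => f' (z + d) - f' z - c * d) (fun d => f'' (z + d) - c)).
  - intro x. auto_derive; [eexists; apply Df|]. rewrite (is_derive_unique _ _ _ (Df _)). field.
  - intro x. auto_derive; [eexists; apply Df'|]. rewrite (is_derive_unique _ _ _ (Df' _)). field.
  - intro x. specialize (Hc (z + x)). lra.
  - rewrite Rplus_0_r. field.
  - rewrite Rplus_0_r. field.
Qed.

Lemma taylor2_upper (f f' f'' : R -> R) c :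
  (forall x, is_derive f x (f' x)) -> (forall x, is_derive f' x (f'' x)) ->
  (forall x, f'' x <= c) ->
  forall z d, f (z + d) <= f z + f' z * d + c * d ^ 2 / 2.
Proof.
  intros Df Df' Hc z d.
  enough (- f z + - f' z * d + - c * d ^ 2 / 2 <= - f (z + d)) by lra.
  apply (taylor2_lower (fun x => - f x) (fun x => - f' x) (fun x => - f'' x)).
  - intro x. apply (is_derive_opp f), Df.
  - intro x. apply (is_derive_opp f'), Df'.
  - intro x. specialize (Hc x). lra.
Qed.

Lemma is_derive_sumR n (F : nat -> R -> R) (F' : nat -> R) x :
  (forall k, (k < n)%nat -> is_derive (F k) x (F' k)) ->
  is_derive (fun h => sumR n (fun k => F k h)) x (sumR n F').
Proof.
  induction n as [|n IH]; intro H; simpl.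
  - apply (is_derive_const (K := R_AbsRing) (V := R_NormedModule)).
  - apply (is_derive_plus (K := R_AbsRing) (V := R_NormedModule)).
    + apply IH. intros; apply H; lia.
    + apply H; lia.
Qed.

Lemma inner_vsub_shift p a th th0 i h : (i < p)%nat ->
  inner p a (vsub (fun k => th k + h * unitv i k) th0) = inner p a (vsub th th0) + h * a i.
Proof.
  intro Hi. rewrite <- inner_unitv with (p := p) by exact Hi. rewrite <- inner_linr.
  apply inner_ext; intros; unfold vsub; ring.
Qed.

Section Loss.

Variables (b : R -> R) (p t : nat) (th0 : vec) (g : nat -> vec) (r : nat -> R).
Variables (M lam al : R) (u : vec).
Hypothesis b_derivable : forall z, ex_derive b z.
Let b_is_derive z : is_derive b z (Derive b z) := Derive_correct _ _ (b_derivable z).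

Local Notation L := (lossL b p t th0 g r M lam al u).

Lemma grad_lossL th i : (i < p)%nat ->
  grad L th i =
  sumR (t - 1) (fun k => (Derive b (inner p (g (S k)) (vsub th th0)) - r (S k)) * g (S k) i)
  + M * lam * vsub th th0 i - al * u i.
Proof.
  intro Hi. unfold grad. apply is_derive_unique.
  set (x := vsub th th0).
  set (z k := inner p (g (S k)) x).
  set (Phi h := sumR (t - 1) (fun k => b (z k + h * g (S k) i) - r (S k) * (z k + h * g (S k) i))
                + M * lam / 2 * (inner p x x + 2 * h * x i + h ^ 2) - al * (inner p u x + h * u i)).
  assert (HPhi : forall h, Phi h = L (fun k => th k + h * unitv i k)).
  { intro h. unfold Phi, lossL. set (th' := fun k => th k + h * unitv i k).
    assert (Hsh : forall a, inner p a (vsub th' th0) = inner p a x + h * a i)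
      by (intro a; apply inner_vsub_shift, Hi).
    assert (Hx' : vsub th' th0 i = x i + h)
      by (unfold x, th', vsub, unitv; rewrite Nat.eqb_refl; ring).
    rewrite norm2_sq, Hsh, (inner_comm p (vsub th' th0) x), Hsh, Hx', Hsh.
    rewrite (sumR_ext _ (fun k => b (inner p (g (S k)) (vsub th' th0))
                                  - r (S k) * inner p (g (S k)) (vsub th' th0))
               (fun k => b (z k + h * g (S k) i) - r (S k) * (z k + h * g (S k) i))).
    + ring.
    + intros k _. rewrite Hsh. easy. }
  apply (is_derive_ext Phi); [exact HPhi|]. unfold Phi.
  apply (is_derive_minus (K := R_AbsRing) (V := R_NormedModule));
    [apply (is_derive_plus (K := R_AbsRing) (V := R_NormedModule))|].
  - apply (is_derive_sumR _ (fun k h => b (z k + h * g (S k) i) - r (S k) * (z k + h * g (S k) i))).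
    intros k _. auto_derive; [apply b_derivable|].
    rewrite Rmult_0_l, Rplus_0_r. change (fun y => b y) with b. unfold z. ring.
  - auto_derive; [easy|]. field.
  - auto_derive; [easy|ring].
Qed.

Lemma inner_grad_lossL th y :
  inner p (grad L th) y =
  sumR (t - 1) (fun k =>
    (Derive b (inner p (g (S k)) (vsub th th0)) - r (S k)) * inner p (g (S k)) y)
  + M * lam * inner p (vsub th th0) y - al * inner p u y.
Proof.
  set (c k := Derive b (inner p (g (S k)) (vsub th th0)) - r (S k)).
  transitivity (sumR p (fun i => sumR (t - 1) (fun k => c k * (g (S k) i * y i))
                                 + M * lam * (vsub th th0 i * y i) - al * (u i * y i))).
  - apply sumR_ext. intros i Hi. rewrite grad_lossL by exact Hi.
    rewrite (sumR_ext _ (fun k => c k * (g (S k) i * y i)) (fun k => y i * (c k * g (S k) i)))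
      by (intros; ring).
    rewrite sumR_scal. unfold c. ring.
  - rewrite sumR_minus, sumR_plus, sumR_swap. unfold inner. rewrite <- !sumR_scal.
    do 2 f_equal. apply sumR_ext. intros k _. rewrite <- sumR_scal. easy.
Qed.

Hypothesis Db_derivable : forall z, ex_derive (Derive b) z.
Let Db_is_derive z : is_derive (Derive b) z (Derive (Derive b) z) :=
  Derive_correct _ _ (Db_derivable z).

Lemma lossL_gd_step_le (Ub K eta : R) th :
  (forall z, Derive (Derive b) z <= Ub) -> 0 <= Ub -> 0 <= M * lam ->
  (forall k, (k < t - 1)%nat -> inner p (g (S k)) (g (S k)) <= K) ->
  0 < eta -> eta * (M * lam + Ub * INR (t - 1) * K) <= 1 ->
  L (fun i => th i - eta * grad L th i) <= L th.
Proof.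
  intros HUb Ub_ge0 Mlam_ge0 HK eta_gt0 Heta.
  set (v := grad L th). set (x := vsub th th0). set (th' := fun i => th i - eta * v i).
  set (c k := Derive b (inner p (g (S k)) x) - r (S k)).
  set (w k := inner p (g (S k)) v).
  set (V := inner p v v).
  assert (Hshift : forall a, inner p a (vsub th' th0) = inner p a x - eta * inner p a v).
  { intro a. transitivity (inner p a (fun i => x i + - eta * v i)).
    - apply inner_ext. intros; unfold th', x, vsub; ring.
    - rewrite inner_linr. ring. }
  assert (Hnorm : inner p (vsub th' th0) (vsub th' th0)
                  = inner p x x - 2 * eta * inner p x v + eta ^ 2 * V).
  { rewrite Hshift, inner_comm, Hshift, (inner_comm p (vsub th' th0) v), Hshift, (inner_comm p v x).
    unfold V. ring. }
  assert (HV : V = sumR (t - 1) (fun k => c k * w k) + M * lam * inner p x v - al * inner p u v)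
    by apply inner_grad_lossL.
  assert (Hw : sumR (t - 1) (fun k => w k ^ 2) <= INR (t - 1) * K * V)
    by (apply sumR_inner_sq_le, HK).
  assert (Hterms : sumR (t - 1) (fun k => b (inner p (g (S k)) (vsub th' th0))
                                          - r (S k) * inner p (g (S k)) (vsub th' th0))
     <= sumR (t - 1) (fun k => (b (inner p (g (S k)) x) - r (S k) * inner p (g (S k)) x)
                     + (- eta) * (c k * w k) + (Ub * eta ^ 2 / 2) * w k ^ 2)).
  { apply sumR_le. intros k _. rewrite Hshift.
    pose proof (taylor2_upper b (Derive b) (Derive (Derive b)) Ub
      b_is_derive Db_is_derive HUb (inner p (g (S k)) x) (- eta * w k)).
    unfold c, w in *. replace (inner p (g (S k)) x - eta * inner p (g (S k)) v)
      with (inner p (g (S k)) x + - eta * inner p (g (S k)) v) by ring.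
    nra. }
  rewrite !sumR_plus, !sumR_scal in Hterms.
  unfold lossL. fold th'. fold x. rewrite !norm2_sq, Hnorm, Hshift.
  (* The first-order terms add up to -eta V; the second-order ones are at most
     eta^2/2 (M lam + Ub (t-1) K) V <= eta V / 2 by the step-size condition. *)
  assert (0 <= V) by apply inner_self_nonneg.
  assert (eta ^ 2 * (Ub * sumR (t - 1) (fun k => w k ^ 2))
          <= eta ^ 2 * (Ub * (INR (t - 1) * K * V))).
  { apply Rmult_le_compat_l; [nra|]. apply Rmult_le_compat_l; assumption. }
  assert (eta * (eta * (M * lam + Ub * INR (t - 1) * K) * V) <= eta * V).
  { apply Rmult_le_compat_l; [lra|]. rewrite <- (Rmult_1_l V) at 2.
    apply Rmult_le_compat_r; assumption. }
  nra.
Qed.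

Lemma lossL_gd_le_start (Ub K eta : R) :
  (forall z, Derive (Derive b) z <= Ub) -> 0 <= Ub -> 0 <= M * lam ->
  (forall k, (k < t - 1)%nat -> inner p (g (S k)) (g (S k)) <= K) ->
  0 < eta -> eta * (M * lam + Ub * INR (t - 1) * K) <= 1 ->
  forall j, L (gd L eta th0 j) <= L th0.
Proof.
  intros HUb Ub_ge0 Mlam_ge0 HK eta_gt0 Heta j.
  induction j as [|j IH]; simpl; [lra|].
  eapply Rle_trans; [|exact IH]. eapply lossL_gd_step_le; eassumption.
Qed.

Lemma lossL_start : L th0 = sumR (t - 1) (fun _ => b 0).
Proof.
  unfold lossL. rewrite norm2_sq, !inner_vsub_self.
  rewrite (sumR_ext _ _ (fun _ => b 0)); [ring|]. intros k _. rewrite inner_vsub_self. ring.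
Qed.

Lemma lossL_ge (Lb : R) th :
  (forall z, Lb <= Derive (Derive b) z) -> 0 < Lb ->
  sumR (t - 1) (fun _ => b 0) - sumR (t - 1) (fun k => (Derive b 0 - r (S k)) ^ 2) / (2 * Lb)
  + M * lam / 2 * norm2 p (vsub th th0) ^ 2 - al * inner p u (vsub th th0) <= L th.
Proof.
  intros HLb Lb_gt0. unfold lossL.
  enough (sumR (t - 1) (fun k => b 0 - / (2 * Lb) * (Derive b 0 - r (S k)) ^ 2)
          <= sumR (t - 1) (fun k => b (inner p (g (S k)) (vsub th th0))
                                    - r (S k) * inner p (g (S k)) (vsub th th0))).
  { rewrite sumR_minus, sumR_scal in H. unfold Rdiv. lra. }
  apply sumR_le. intros k _. set (z := inner p (g (S k)) (vsub th th0)).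
  pose proof (taylor2_lower b (Derive b) (Derive (Derive b)) Lb
    b_is_derive Db_is_derive HLb 0 z) as Hb.
  rewrite Rplus_0_l in Hb.
  pose proof (quadratic_ge_min (b 0) (Derive b 0 - r (S k)) Lb z Lb_gt0). lra.
Qed.

Lemma gd_dist_sq_le (Lb Ub K eta : R) :
  (forall z, Lb <= Derive (Derive b) z <= Ub) -> 0 < Lb -> 0 <= M * lam -> 0 <= al ->
  (forall k, (k < t - 1)%nat -> inner p (g (S k)) (g (S k)) <= K) ->
  0 < eta -> eta * (M * lam + Ub * INR (t - 1) * K) <= 1 ->
  forall j, (M * lam * norm2 p (vsub (gd L eta th0 j) th0)) ^ 2
            <= 4 * (al * norm2 p u) ^ 2
               + 4 * (M * lam) * (sumR (t - 1) (fun k => (Derive b 0 - r (S k)) ^ 2) / (2 * Lb)).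
Proof.
  intros Hb'' Lb_gt0 Mlam_ge0 al_ge0 HK eta_gt0 Heta j.
  set (x := vsub (gd L eta th0 j) th0).
  assert (HUb : forall z, Derive (Derive b) z <= Ub) by (intro z; apply Hb'').
  assert (Ub_ge0 : 0 <= Ub) by (destruct (Hb'' 0); lra).
  pose proof (lossL_gd_le_start Ub K eta HUb Ub_ge0 Mlam_ge0 HK eta_gt0 Heta j) as Hdesc.
  pose proof (lossL_ge Lb (gd L eta th0 j) (fun z => proj1 (Hb'' z)) Lb_gt0) as Hlow.
  rewrite lossL_start in Hdesc. fold x in Hlow.
  assert (al * inner p u x <= al * norm2 p u * norm2 p x).
  { rewrite Rmult_assoc. apply Rmult_le_compat_l, inner_le_norm2; assumption. }
  apply sq_le_of_half_sq_le; [assumption|]. lra.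
Qed.

End Loss.

Definition gd_radius_sq G A Lb b1 := 4 * (G ^ 2 + b1 ^ 2 / Lb) / ln 3 + 4 * A / Lb.

Lemma gd_radius_sq_pos G A Lb b1 : 0 < A -> 0 < Lb -> 0 < gd_radius_sq G A Lb b1.
Proof.
  intros HA HLb. destruct (ln_ge_ln3 3 (Rle_refl 3)) as [Hl3 _]. unfold gd_radius_sq.
  assert (0 < 4 * A / Lb) by (apply Rdiv_lt_0_compat; lra).
  assert (0 <= b1 ^ 2 / Lb) by (apply Rdiv_le_0_compat; [apply pow2_ge_0|lra]).
  assert (0 <= 4 * (G ^ 2 + b1 ^ 2 / Lb) / ln 3) by (apply Rdiv_le_0_compat; nra).
  lra.
Qed.

(* [t >= 3] is used only through [ln t >= ln 3 > 0], which absorbs the O(t) terms into O(t ln t). *)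
Lemma gd_constant_bound G A Lb b1 M T lam U S N :
  0 < Lb -> 1 <= M -> 3 <= T -> 0 < lam <= 1 ->
  0 <= U <= G * sqrt M -> 0 <= S <= 2 * T * b1 ^ 2 + 2 * (A * T * ln T) ->
  (M * lam * N) ^ 2 <= 4 * (sqrt T * U) ^ 2 + 4 * (M * lam) * (S / (2 * Lb)) ->
  M * lam ^ 2 * N ^ 2 <= gd_radius_sq G A Lb b1 * (T * ln T).
Proof.
  intros HLb HM HT Hlam HU HS Hdist. unfold gd_radius_sq.
  destruct (ln_ge_ln3 T HT) as [Hl3 Hl].
  assert (HU2 : (sqrt T * U) ^ 2 <= T * (G ^ 2 * M)).
  { rewrite Rpow_mult_distr, pow2_sqrt by lra.
    apply Rmult_le_compat_l; [lra|]. replace (G ^ 2 * M) with ((G * sqrt M) ^ 2).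
    - apply pow_incr; lra.
    - rewrite Rpow_mult_distr, pow2_sqrt; lra. }
  assert (HSL : lam * (S / Lb) <= (2 * T * b1 ^ 2 + 2 * (A * T * ln T)) / Lb).
  { apply Rle_trans with (S / Lb).
    - assert (0 <= S / Lb) by (apply Rdiv_le_0_compat; lra). nra.
    - apply Rmult_le_compat_r; [apply Rlt_le, Rinv_0_lt_compat|]; lra. }
  assert (Hsq : M * lam ^ 2 * N ^ 2 <= 4 * T * G ^ 2 + 2 * (lam * (S / Lb))).
  { apply (Rmult_le_reg_l M); [lra|].
    replace (M * (M * lam ^ 2 * N ^ 2)) with ((M * lam * N) ^ 2) by ring.
    replace (M * (4 * T * G ^ 2 + 2 * (lam * (S / Lb))))
      with (4 * (T * (G ^ 2 * M)) + 4 * (M * lam) * (S / (2 * Lb))) by (field; lra).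
    lra. }
  assert (HT1 : T <= T * ln T / ln 3).
  { apply (Rmult_le_reg_r (ln 3)); [lra|].
    replace (T * ln T / ln 3 * ln 3) with (T * ln T) by (field; lra).
    apply Rmult_le_compat_l; lra. }
  replace ((4 * (G ^ 2 + b1 ^ 2 / Lb) / ln 3 + 4 * A / Lb) * (T * ln T))
    with (4 * (G ^ 2 + b1 ^ 2 / Lb) * (T * ln T / ln 3) + 4 * (A * T * ln T) / Lb) by (field; lra).
  replace ((2 * T * b1 ^ 2 + 2 * (A * T * ln T)) / Lb)
    with (2 * (b1 ^ 2 / Lb) * T + 2 * (A * T * ln T) / Lb) in HSL by (field; lra).
  assert (0 <= G ^ 2 + b1 ^ 2 / Lb).
  { apply Rplus_le_le_0_compat; [apply pow2_ge_0|apply Rdiv_le_0_compat; [apply pow2_ge_0|lra]]. }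
  assert (0 <= b1 ^ 2 / Lb) by (apply Rdiv_le_0_compat; [apply pow2_ge_0|lra]).
  nra.
Qed.

Theorem mainTheorem5 :
  forall (G A Lb b0 b1 : R), 0 < G -> 0 < A -> 0 < Lb ->
  exists E : R, 0 < E /\
  forall (b : R -> R) (Ub : R) (m t p : nat) (lam eta : R)
         (th0 : vec) (g : nat -> vec) (u : vec) (r : nat -> R),
    (forall z, ex_derive b z) ->
    (forall z, ex_derive (Derive b) z) ->
    (forall z, Lb <= Derive (Derive b) z <= Ub) ->
    b 0 = b0 -> Derive b 0 = b1 ->
    (1 <= m)%nat -> 0 < lam <= 1 -> (3 <= t)%nat ->
    (forall s, (1 <= s <= t - 1)%nat -> norm2 p (g s) <= G * sqrt (INR m)) ->
    norm2 p u <= G * sqrt (INR m) ->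
    sumR (t - 1) (fun k => (r (S k)) ^ 2) <= A * INR t * ln (INR t) ->
    0 < eta <= / (INR m * lam + Ub * INR t * INR m * G ^ 2) ->
    forall j : nat,
      norm2 p (vsub (gd (lossL b p t th0 g r (INR m) lam (sqrt (INR t)) u) eta th0 j) th0)
      <= E * sqrt (INR t * ln (INR t) / (INR m * lam ^ 2)).
Proof.
  intros G A Lb b0 b1 HG HA HLb.
  pose proof (gd_radius_sq_pos G A Lb b1 HA HLb) as HE2.
  exists (sqrt (gd_radius_sq G A Lb b1)). split; [apply sqrt_lt_R0, HE2|].
  intros b Ub m t p lam eta th0 g u r Db DDb Hb'' <- <- Hm Hlam Ht Hg Hu Hr Heta j.
  assert (HM : 1 <= INR m) by (replace 1 with (INR 1) by reflexivity; apply le_INR, Hm).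
  assert (HT : 3 <= INR t) by (replace 3 with (INR 3) by (simpl; ring); apply le_INR, Ht).
  assert (Ht1 : INR (t - 1) <= INR t) by (apply le_INR; lia).
  assert (HUb : Lb <= Ub) by (destruct (Hb'' 0); lra).
  assert (HK : forall k, (k < t - 1)%nat -> inner p (g (S k)) (g (S k)) <= G ^ 2 * INR m).
  { intros k Hk. replace (G ^ 2 * INR m) with ((G * sqrt (INR m)) ^ 2)
      by (rewrite Rpow_mult_distr, pow2_sqrt; lra).
    apply inner_self_le_of_norm2_le, Hg. lia. }
  assert (Hstep : eta * (INR m * lam + Ub * INR (t - 1) * (G ^ 2 * INR m)) <= 1).
  { assert (0 <= Ub * (G ^ 2 * INR m)) by (apply Rmult_le_pos; nra).
    apply (mul_le_one_of_le_inv _ (INR m * lam + Ub * INR t * INR m * G ^ 2)); [nra|lra|nra]. }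
  pose proof (gd_dist_sq_le b p t th0 g r (INR m) lam (sqrt (INR t)) u Db DDb
                Lb Ub (G ^ 2 * INR m) eta Hb'' HLb ltac:(nra) (sqrt_pos _) HK (proj1 Heta) Hstep j)
    as Hdist.
  assert (HS : 0 <= sumR (t - 1) (fun k => (Derive b 0 - r (S k)) ^ 2)
               <= 2 * INR t * Derive b 0 ^ 2 + 2 * (A * INR t * ln (INR t))).
  { split.
    - rewrite <- (Rmult_0_r (INR (t - 1))), <- sumR_const. apply sumR_le; intros; apply pow2_ge_0.
    - eapply Rle_trans; [apply sumR_sq_sub_le|]. pose proof (pow2_ge_0 (Derive b 0)). nra. }
  apply le_mul_sqrt_of_sq_le; [apply sqrt_pos|nra|lra|].
  eapply gd_constant_bound; eauto. split; [apply sqrt_pos|exact Hu].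
Qed.
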